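(* Let $m\ge1$. For $q\in[0,1/m]$ let $G(m,q)=(1-(m-1)q)\,H\!\left(\frac{q}{1-(m-1)q}\right)$, where $H(x)=-x\log_2x-(1-x)\log_2(1-x)$ is the binary entropy function (with $H(0)=H(1)=0$). For $n\ge1$ and $q$ let $\mathcal T_n^{(q)}=\{\mathbf s\in\mathcal S_n:\ \#\{k:s_k=-\}=nq\}$. Then there is a sequence $\epsilon_m(n)$ with $\epsilon_m(n)\to0$ as $n\to\infty$, not depending on $q$, such that for all $n\ge1$ and all $q\in[0,1/m]$ with $nq\in\mathbb Z$, $$|\mathcal T_n^{(q)}|<2^{\,n\,(G(m,q)+\epsilon_m(n))}.$$
   Context: Fix an integer $m\ge1$. Define integers $N(n)$ by $N(n)=1$ for $1-m\le n\le 0$ and $N(n)=N(n-1)+N(n-m)$ for $n\ge1$; write $\mathbb N_n=\{1,\dots,N(n)\}$ (so $\mathbb N_n=\{1\}$ for $n\le 0$, and $\mathbb N_{n-m}\subseteq\mathbb N_{n-1}$). Define vectors $\mathbf s_n^{(i)}\in\{+,-,\bigstar\}^n$ for $n\ge0$, $i\in\mathbb N_n$, recursively: $\mathbf s_0^{(1)}$ is the empty vector, and for $n\ge1$: $\mathbf s_n^{(j)}=(\mathbf s_{n-1}^{(j)},+)$ and $\mathbf s_n^{(j+N(n-1))}=(\mathbf s_{n-1}^{(j)},-)$ for $j\in\mathbb N_{n-m}$, while $\mathbf s_n^{(j)}=(\mathbf s_{n-1}^{(j)},\bigstar)$ for $j\in\mathbb N_{n-1}\setminus\mathbb N_{n-m}$.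 Let $\mathcal S_n=\{\mathbf s_n^{(i)}:i\in\mathbb N_n\}$ for $n\ge1$. *)

From Stdlib Require Import Reals Lra Lia Arith List.
Import ListNotations.
Open Scope R_scope.

Inductive sgn : Set := Plus | Minus | Star.

Definition sgn_eq_dec : forall x y : sgn, {x = y} + {x <> y}.
Proof. decide equality. Defined.

Definition vec_eq_dec : forall x y : list sgn, {x = y} + {x <> y} :=
  list_eq_dec sgn_eq_dec.

(* Ntab m n = [N(0); N(1); ...; N(n)], with N(n) = 1 for 1-m <= n <= 0 and
   N(n) = N(n-1) + N(n-m).  Since N(k) = 1 for all k <= 0, the value N(n-m)
   can be read with truncated natural subtraction: N(n - m) = N(max(n-m,0)). *)
Fixpoint Ntab (m n : nat) : list nat :=
  match n with
  | O => [1%nat]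
  | S k => let t := Ntab m k in
           t ++ [(nth k t 1 + nth (S k - m) t 1)%nat]
  end.

Definition Nf (m n : nat) : nat := nth n (Ntab m n) 1%nat.

(* Slist m n = [s_n^(1); ...; s_n^(N(n))] (vectors as lists of length n,
   entry k of the list is s_k, 0-based). *)
Fixpoint Slist (m n : nat) : list (list sgn) :=
  match n with
  | O => [[]]
  | S k =>
      let prev := Slist m k in
      let bound := Nf m (S k - m) in
      map (fun p : nat * list sgn =>
             if (fst p <=? bound)%nat then snd p ++ [Plus] else snd p ++ [Star])
          (combine (seq 1 (length prev)) prev)
      ++ map (fun v => v ++ [Minus]) (firstn bound prev)
  end.

(* |T_n^(q)| where nq = k : the number of distinct s in S_n with exactly k
   entries equal to -. *)
Definition Tcard (m n k : nat) : nat :=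
  length (nodup vec_eq_dec
    (filter (fun s => Nat.eqb (count_occ sgn_eq_dec s Minus) k) (Slist m n))).

Definition xlog2x (x : R) : R :=
  if Req_EM_T x 0 then 0 else x * (ln x / ln 2).

Definition Hb (x : R) : R := - xlog2x x - xlog2x (1 - x).

Definition Gmq (m : nat) (q : R) : R :=
  (1 - (INR m - 1) * q) * Hb (q / (1 - (INR m - 1) * q)).

(** The recursion defining [S_n] appends [+] or [★] to every vector of [S_(n-1)]
    and [-] to the first [N(n-m)] of them, which extend the vectors of [S_(n-m)]
    without adding minus signs.  Hence the number [c(n,k)] of vectors of [S_n] with [k] minus signs
    obeys the Pascal-like recursion [c(n+1,k+1) = c(n,k+1) + c(n+1-m,k)], and
    induction gives [c(n,k) <= binom(M + m - 1, k)] with [M = n - (m-1)k].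
    Lowering the top argument by [m-1] costs at most a factor [(n+m)^(m-1)], and
    [binom(M,k) p^k (1-p)^(M-k) <= 1] with [p = k/M] yields
    [binom(M,k) <= 2^(M H(k/M)) = 2^(n G(m,q))].  The polynomial factor is
    absorbed by [eps_m(n) = O(log n / n)]. *)
From Stdlib Require Import Reals List Lia Arith Lra.
From Coquelicot Require Import Coquelicot.
Import ListNotations.
Open Scope R_scope.

Definition minus_count (s : list sgn) : nat := count_occ sgn_eq_dec s Minus.

Definition minus_counts (m n : nat) : list nat := map minus_count (Slist m n).

Lemma minus_count_app_other s x : x <> Minus -> minus_count (s ++ [x]) = minus_count s.
Proof.
  intros Hx. unfold minus_count. rewrite count_occ_app. simpl.
  destruct (sgn_eq_dec x Minus); [congruence | lia].
Qed.

Lemma minus_count_app_Minus s : minus_count (s ++ [Minus]) = S (minus_count s).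
Proof. unfold minus_count. rewrite count_occ_app. simpl. lia. Qed.

Lemma length_filter_eqb {A : Type} (f : A -> nat) (l : list A) (k : nat) :
  length (filter (fun x => Nat.eqb (f x) k) l) = count_occ Nat.eq_dec (map f l) k.
Proof.
  induction l as [|x l IH]; simpl; [reflexivity|].
  destruct (Nat.eqb_spec (f x) k), (Nat.eq_dec (f x) k); simpl; congruence.
Qed.

Fixpoint binom (n k : nat) : nat :=
  match k, n with
  | O, _ => 1
  | S _, O => 0
  | S k', S n' => binom n' k' + binom n' (S k')
  end.

Lemma binom_0_r n : binom n 0 = 1%nat.
Proof. now destruct n. Qed.

Section MinusCounts.

Variable m : nat.
Hypothesis hm : (1 <= m)%nat.

Lemma minus_counts_S n :
  minus_counts m (S n)
  = minus_counts m n ++ map S (firstn (Nf m (S n - m)) (minus_counts m n)).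
Proof.
  unfold minus_counts. cbn [Slist]. rewrite map_app, firstn_map, !map_map. f_equal.
  - generalize 1%nat. induction (Slist m n) as [|s l IH]; intros i; simpl; [reflexivity|].
    rewrite IH. f_equal. destruct (_ <=? _)%nat;
      apply minus_count_app_other; discriminate.
  - apply map_ext. intros s. apply minus_count_app_Minus.
Qed.

Lemma length_Ntab n : length (Ntab m n) = S n.
Proof. induction n as [|n IH]; simpl; [reflexivity|]. rewrite length_app, IH. simpl. lia. Qed.

Lemma nth_Ntab n j : (j <= n)%nat -> nth j (Ntab m n) 1%nat = Nf m j.
Proof.
  induction n as [|n IH]; intros Hj.
  - replace j with 0%nat by lia. reflexivity.
  - destruct (Nat.eq_dec j (S n)) as [->|Hjn]; [reflexivity|].
    cbn [Ntab]. rewrite app_nth1 by (rewrite length_Ntab; lia). apply IH. lia.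
Qed.

Lemma Nf_S n : Nf m (S n) = (Nf m n + Nf m (S n - m))%nat.
Proof.
  unfold Nf at 1. cbn [Ntab].
  rewrite app_nth2, length_Ntab, Nat.sub_diag by (rewrite length_Ntab; lia).
  cbn [nth]. rewrite !nth_Ntab by lia. reflexivity.
Qed.

Lemma Nf_le_mono a b : (a <= b)%nat -> (Nf m a <= Nf m b)%nat.
Proof. induction 1; [lia|]. rewrite Nf_S. lia. Qed.

Lemma length_minus_counts n : length (minus_counts m n) = Nf m n.
Proof.
  induction n as [|n IH]; [reflexivity|].
  rewrite minus_counts_S, length_app, length_map, length_firstn, IH, Nf_S.
  rewrite Nat.min_l; [reflexivity|]. apply Nf_le_mono. lia.
Qed.

Lemma firstn_minus_counts j n :
  (j <= n)%nat -> firstn (Nf m j) (minus_counts m n) = minus_counts m j.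
Proof.
  intros Hjn.
  assert (Hprefix : exists r, minus_counts m n = minus_counts m j ++ r).
  { induction Hjn as [|n _ [r Hr]]; [exists []; now rewrite app_nil_r|].
    rewrite minus_counts_S, Hr, <- app_assoc. eexists. reflexivity. }
  destruct Hprefix as [r ->].
  rewrite <- length_minus_counts, firstn_app, Nat.sub_diag, firstn_O, app_nil_r.
  apply firstn_all.
Qed.

Definition count_minus (n k : nat) : nat := count_occ Nat.eq_dec (minus_counts m n) k.

Lemma Tcard_le_count_minus n k : (Tcard m n k <= count_minus n k)%nat.
Proof.
  unfold Tcard, count_minus, minus_counts. rewrite <- length_filter_eqb.
  apply NoDup_incl_length; [apply NoDup_nodup|].
  intros s Hs. apply nodup_In in Hs. exact Hs.
Qed.

Lemma count_minus_0 n : count_minus n 0 = 1%nat.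
Proof.
  induction n as [|n IH]; [reflexivity|]. unfold count_minus in *.
  rewrite minus_counts_S, count_occ_app, IH.
  enough (Hnew : count_occ Nat.eq_dec
                   (map S (firstn (Nf m (S n - m)) (minus_counts m n))) 0%nat = 0%nat)
    by lia.
  apply count_occ_not_In. rewrite in_map_iff. intros [x [Hx _]]. discriminate.
Qed.

Lemma count_minus_S_S n k :
  count_minus (S n) (S k) = (count_minus n (S k) + count_minus (S n - m) k)%nat.
Proof.
  unfold count_minus. rewrite minus_counts_S, count_occ_app.
  rewrite <- (count_occ_map S Nat.eq_dec Nat.eq_dec) by congruence.
  rewrite firstn_minus_counts by lia. reflexivity.
Qed.

Lemma count_minus_le_binom n k a :
  (n + m - 1 <= a + (m - 1) * k)%nat -> (count_minus n k <= binom a k)%nat.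
Proof.
  revert k a. induction n as [n IH] using lt_wf_ind. intros k a Hnka.
  destruct k as [|k]; [rewrite count_minus_0, binom_0_r; reflexivity|].
  destruct n as [|n]; [apply Nat.le_0_l|].
  rewrite count_minus_S_S.
  assert (Hstay : (count_minus n (S k) <= binom (pred a) (S k))%nat) by (apply IH; nia).
  assert (Hstep : (count_minus (S n - m) k <= binom (pred a) k)%nat).
  { destruct k as [|k]; [rewrite count_minus_0, binom_0_r; reflexivity|]. apply IH; nia. }
  destruct a as [|a]; [destruct k; [nia | simpl in *; lia] | simpl in *; lia].
Qed.

End MinusCounts.

Lemma binom_gt n k : (n < k)%nat -> binom n k = 0%nat.
Proof.
  revert k. induction n as [|n IH]; intros [|k] Hnk; simpl; try lia.
  rewrite !IH by lia. reflexivity.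
Qed.

Lemma C_0_r n : Binomial.C n 0 = 1.
Proof.
  unfold Binomial.C. rewrite Nat.sub_0_r. simpl (INR (fact 0)).
  field. apply INR_fact_neq_0.
Qed.

Lemma C_diag n : Binomial.C n n = 1.
Proof.
  unfold Binomial.C. rewrite Nat.sub_diag. simpl (INR (fact 0)).
  field. apply INR_fact_neq_0.
Qed.

Lemma INR_binom n k : (k <= n)%nat -> INR (binom n k) = Binomial.C n k.
Proof.
  revert k. induction n as [|n IH]; intros k Hk.
  - replace k with 0%nat by lia. now rewrite C_0_r.
  - destruct k as [|k]; [now rewrite C_0_r|].
    cbn [binom]. rewrite plus_INR.
    destruct (Nat.eq_dec k n) as [->|Hkn].
    + rewrite (binom_gt n (S n)), IH, !C_diag by lia. simpl. ring.
    + rewrite !IH by lia. apply pascal. lia.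
Qed.

Lemma C_nonneg n k : 0 <= Binomial.C n k.
Proof.
  unfold Binomial.C. apply Rle_mult_inv_pos; [apply pos_INR|].
  apply Rmult_lt_0_compat; apply INR_fact_lt_0.
Qed.

Lemma C_S_le n k : (k <= n)%nat -> Binomial.C (S n) k <= INR (S n) * Binomial.C n k.
Proof.
  intros Hk. rewrite pascal_step2 by lia.
  apply Rmult_le_compat_r; [apply C_nonneg|].
  assert (1 <= INR (S n - k)) by (apply (le_INR 1); lia).
  assert (0 < INR (S n)) by (apply lt_0_INR; lia).
  unfold Rdiv. rewrite <- (Rmult_1_r (INR (S n))) at 2.
  apply Rmult_le_compat_l; [lra|].
  rewrite <- Rinv_1. apply Rinv_le_contravar; lra.
Qed.

Lemma C_add_le n d k :
  (k <= n)%nat -> Binomial.C (n + d) k <= Binomial.C n k * INR (n + d) ^ d.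
Proof.
  intros Hk. induction d as [|d IH]; [rewrite Nat.add_0_r; simpl; lra|].
  rewrite Nat.add_succ_r.
  eapply Rle_trans; [apply C_S_le; lia|].
  eapply Rle_trans; [apply Rmult_le_compat_l; [apply pos_INR | exact IH]|].
  rewrite <- tech_pow_Rmult, Rmult_comm, Rmult_assoc.
  apply Rmult_le_compat_l; [apply C_nonneg|].
  rewrite Rmult_comm. apply Rmult_le_compat_l; [apply pos_INR|].
  apply pow_incr. split; [apply pos_INR | apply le_INR; lia].
Qed.

Lemma sum_f_R0_ge_term f N k :
  (forall i, 0 <= f i) -> (k <= N)%nat -> f k <= sum_f_R0 f N.
Proof.
  intros Hf Hk. induction N as [|N IH].
  - replace k with 0%nat by lia. simpl. lra.
  - simpl. pose proof (Hf (S N)).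
    destruct (Nat.eq_dec k (S N)) as [->|HkN].
    + enough (0 <= sum_f_R0 f N) by lra.
      apply cond_pos_sum. exact Hf.
    + enough (f k <= sum_f_R0 f N) by lra. apply IH. lia.
Qed.

Lemma C_mul_pow_le_1 n k p : (k <= n)%nat -> 0 <= p <= 1 ->
  Binomial.C n k * p ^ k * (1 - p) ^ (n - k) <= 1.
Proof.
  intros Hk Hp.
  replace 1 with ((p + (1 - p)) ^ n) at 2 by (rewrite Rplus_minus; apply pow1).
  rewrite binomial.
  apply (sum_f_R0_ge_term (fun i => Binomial.C n i * p ^ i * (1 - p) ^ (n - i))); [|exact Hk].
  intros i. apply Rmult_le_pos; [apply Rmult_le_pos; [apply C_nonneg|]|]; apply pow_le; lra.
Qed.

Lemma ln2_pos : 0 < ln 2.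
Proof. pose proof ln_lt_2. lra. Qed.

Lemma xlog2x_0 : xlog2x 0 = 0.
Proof. unfold xlog2x. destruct (Req_EM_T 0 0); lra. Qed.

Lemma xlog2x_mul_ln2 x : 0 < x -> xlog2x x * ln 2 = x * ln x.
Proof.
  intros Hx. pose proof ln2_pos. unfold xlog2x.
  destruct (Req_EM_T x 0); [lra|]. field. lra.
Qed.

Lemma Hb_0 : Hb 0 = 0.
Proof.
  assert (H1 : xlog2x 1 = 0).
  { pose proof ln2_pos. apply (Rmult_eq_reg_r (ln 2)); [|lra].
    rewrite xlog2x_mul_ln2, ln_1; lra. }
  unfold Hb. rewrite Rminus_0_r, xlog2x_0, H1. ring.
Qed.

Lemma Hb_sym x : Hb (1 - x) = Hb x.
Proof. unfold Hb. replace (1 - (1 - x)) with x by ring. ring. Qed.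

Lemma Hb_mul_ln2 p : 0 < p < 1 -> Hb p * ln 2 = - (p * ln p + (1 - p) * ln (1 - p)).
Proof.
  intros Hp. unfold Hb.
  rewrite Rmult_minus_distr_r, Ropp_mult_distr_l_reverse, !xlog2x_mul_ln2 by lra. ring.
Qed.

Lemma C_le_Rpower_Hb n k : (0 < n)%nat -> (k <= n)%nat ->
  Binomial.C n k <= Rpower 2 (INR n * Hb (INR k / INR n)).
Proof.
  intros Hn Hk. assert (Hn' : 0 < INR n) by (apply lt_0_INR; lia).
  destruct (Nat.eq_dec k 0) as [->|Hk0].
  { rewrite C_0_r, Rdiv_0_l, Hb_0, Rmult_0_r, Rpower_O; lra. }
  destruct (Nat.eq_dec k n) as [->|Hkn].
  { rewrite C_diag, Rdiv_diag, <- Hb_sym, Rminus_diag, Hb_0, Rmult_0_r, Rpower_O; lra. }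
  set (p := INR k / INR n).
  assert (Hkp : INR k = INR n * p) by (unfold p; field; lra).
  assert (Hp : 0 < p < 1).
  { assert (0 < INR k < INR n) by (split; [apply lt_0_INR | apply lt_INR]; lia).
    split; apply (Rmult_lt_reg_l (INR n)); nra. }
  set (P := p ^ k * (1 - p) ^ (n - k)).
  assert (HP : 0 < P) by (unfold P; apply Rmult_lt_0_compat; apply pow_lt; lra).
  assert (Hpower : Rpower 2 (INR n * Hb p) * P = 1).
  { unfold Rpower. rewrite <- (exp_ln P HP), <- exp_plus, <- exp_0. f_equal.
    unfold P. rewrite ln_mult, !ln_pow, minus_INR, Hkp, Rmult_assoc, Hb_mul_ln2
      by (try apply pow_lt; lra || lia).
    ring. }
  apply (Rmult_le_reg_r P); [exact HP|]. rewrite Hpower.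
  unfold P. rewrite <- Rmult_assoc. apply C_mul_pow_le_1; [lia | lra].
Qed.

Lemma Tcard_le_C_mul_pow m n k : (1 <= m)%nat -> (m * k <= n)%nat ->
  INR (Tcard m n k) <= Binomial.C (n - (m - 1) * k) k * (INR n + INR m) ^ (m - 1).
Proof.
  intros hm Hmk.
  assert (Hk : ((m - 1) * k + k <= n)%nat).
  { replace ((m - 1) * k + k)%nat with (m * k)%nat by nia. exact Hmk. }
  set (M := (n - (m - 1) * k)%nat).
  eapply Rle_trans; [apply le_INR, Tcard_le_count_minus|].
  eapply Rle_trans.
  { apply le_INR, (count_minus_le_binom m hm n k (M + (m - 1))). unfold M. lia. }
  rewrite INR_binom by lia.
  eapply Rle_trans; [apply C_add_le; unfold M; lia|].
  apply Rmult_le_compat_l; [apply C_nonneg|].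
  apply pow_incr. split; [apply pos_INR|].
  rewrite <- plus_INR. apply le_INR. unfold M. revert Hk. generalize ((m - 1) * k)%nat. lia.
Qed.

Lemma INR_mul_Gmq m n k q : (1 <= m)%nat -> (1 <= n)%nat -> (m * k <= n)%nat ->
  INR n * q = INR k ->
  INR n * Gmq m q = INR (n - (m - 1) * k) * Hb (INR k / INR (n - (m - 1) * k)).
Proof.
  intros hm hn Hmk Hk.
  assert (HM : INR (n - (m - 1) * k) = INR n * (1 - (INR m - 1) * q)).
  { rewrite minus_INR, mult_INR, minus_INR, <- Hk by nia. simpl (INR 1). ring. }
  assert (HMpos : 0 < INR (n - (m - 1) * k)) by (apply lt_0_INR; nia).
  assert (Hn : 0 < INR n) by (apply lt_0_INR; lia).
  unfold Gmq. rewrite HM, <- Hk.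
  set (D := 1 - (INR m - 1) * q) in *.
  assert (HD : 0 < D) by nra.
  replace (INR n * q / (INR n * D)) with (q / D) by (field; lra).
  ring.
Qed.

Definition eps_seq (m n : nat) : R :=
  INR (m + 1) * (1 + INR (m - 1) / ln 2 * ln (INR n + INR m)) / (INR n + INR m).

Lemma ln_over_cv (a b c : R) :
  Un_cv (fun n => a * (1 + b * ln (INR n + c)) / (INR n + c)) 0.
Proof.
  apply is_lim_seq_Reals.
  assert (Hinf : is_lim_seq (fun n => INR n + c) p_infty).
  { eapply is_lim_seq_plus; [apply is_lim_seq_INR | apply is_lim_seq_const | reflexivity]. }
  assert (Hinv : is_lim_seq (fun n => / (INR n + c)) 0).
  { replace (Finite 0) with (Rbar_inv p_infty) by reflexivity.
    apply is_lim_seq_inv; [exact Hinf | discriminate]. }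
  assert (Hln : is_lim_seq (fun n => ln (INR n + c) / (INR n + c)) 0).
  { apply (filterlim_comp nat R R (fun n => INR n + c) (fun y => ln y / y)
      eventually (Rbar_locally p_infty) (Rbar_locally 0));
      [exact Hinf | apply is_lim_div_ln_p]. }
  apply is_lim_seq_ext with
    (fun n => a * / (INR n + c) + a * b * (ln (INR n + c) / (INR n + c))).
  - intros n. unfold Rdiv. ring.
  - replace (Finite 0) with (Finite (a * 0 + a * b * 0)) by (f_equal; ring).
    apply is_lim_seq_plus';
      [apply (is_lim_seq_scal_l _ a 0 Hinv) | apply (is_lim_seq_scal_l _ (a * b) 0 Hln)].
Qed.

Lemma eps_seq_cv m : Un_cv (eps_seq m) 0.
Proof. unfold eps_seq. apply ln_over_cv. Qed.

Lemma pow_lt_Rpower_eps_seq m n : (1 <= n)%nat ->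
  (INR n + INR m) ^ (m - 1) < Rpower 2 (INR n * eps_seq m n).
Proof.
  intros hn. pose proof ln2_pos.
  assert (Hn : 1 <= INR n) by (apply (le_INR 1); exact hn).
  assert (Hnm : 1 <= INR n + INR m) by (pose proof (pos_INR m); lra).
  set (L := INR (m - 1) / ln 2 * ln (INR n + INR m)).
  assert (HL : 0 <= L).
  { unfold L. apply Rmult_le_pos.
    - apply Rdiv_le_0_compat; [apply pos_INR | lra].
    - rewrite <- ln_1. apply ln_le; lra. }
  assert (Hpow : Rpower 2 (1 + L) = 2 * (INR n + INR m) ^ (m - 1)).
  { rewrite Rpower_plus, Rpower_1, <- Rpower_pow by lra. f_equal.
    unfold Rpower, L. f_equal. field. lra. }
  assert (Hexp : 1 + L <= INR n * eps_seq m n).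
  { unfold eps_seq. fold L. rewrite plus_INR. simpl (INR 1).
    apply (Rmult_le_reg_r (INR n + INR m)); [lra|].
    field_simplify; [|lra]. pose proof (pos_INR m).
    assert (0 <= (L + 1) * INR m * (INR n - 1))
      by (apply Rmult_le_pos; [apply Rmult_le_pos|]; lra).
    nra. }
  eapply Rlt_le_trans; [|apply Rle_Rpower; [lra | exact Hexp]].
  rewrite Hpow. pose proof (pow_lt (INR n + INR m) (m - 1)). lra.
Qed.

Theorem lemma3 (m : nat) (hm : (1 <= m)%nat) :
  exists eps : nat -> R,
    Un_cv eps 0 /\
    forall (n : nat), (1 <= n)%nat ->
    forall (q : R), 0 <= q <= 1 / INR m ->
    forall (k : nat), INR n * q = INR k ->
      INR (Tcard m n k) < Rpower 2 (INR n * (Gmq m q + eps n)).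
Proof.
  exists (eps_seq m). split; [apply eps_seq_cv|].
  intros n hn q [hq0 hq1] k hk.
  assert (Hmk : (m * k <= n)%nat).
  { assert (Hm : 0 < INR m) by (apply lt_0_INR; lia).
    assert (Hmq : INR m * q <= 1).
    { replace 1 with (INR m * (1 / INR m)) by (field; lra). apply Rmult_le_compat_l; lra. }
    apply INR_le. rewrite mult_INR, <- hk. pose proof (pos_INR n). nra. }
  rewrite Rmult_plus_distr_l, Rpower_plus, (INR_mul_Gmq m n k q) by assumption.
  eapply Rle_lt_trans; [apply Tcard_le_C_mul_pow; assumption|].
  eapply Rle_lt_trans.
  - apply Rmult_le_compat_r; [apply pow_le; pose proof (pos_INR n); pose proof (pos_INR m); lra|].
    apply C_le_Rpower_Hb; nia.
  - apply Rmult_lt_compat_l; [apply exp_pos | apply pow_lt_Rpower_eps_seq; exact hn].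
Qed.
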